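(* Let $\mathbb{F}$ be a field of characteristic not $2$, let $V$ be a $2$-dimensional $\mathbb{F}$-space with basis $u,v$ and symmetric bilinear form $B$ with $B(u,u)=B(v,v)=1$, $B(u,v)=\delta$, and let $\mathfrak{S}(\delta)=\mathbb{F}\oplus V$ with product $(\alpha+x)(\beta+y)=(\alpha\beta+B(x,y))+(\alpha y+\beta x)$. Put $a=\frac12(1+u)$ and $b=\frac12(1+v)$. Then: (a) $a$ and $b$ generate $\mathfrak{S}(\delta)$ if and only if $\delta\neq 1$; in this case $\mathfrak{S}(\delta)\cong\mathfrak{J}(\frac12(1+\delta))$ via an isomorphism sending the generators $\mathfrak{a},\mathfrak{b}$ of $\mathfrak{J}$ to $a,b$; (b) if $\delta=1$ then $\langle\langle a,b\rangle\rangle=\mathrm{span}\{a,b\}$ is a $2$-dimensional subalgebra isomorphic to $\mathfrak{J}(1)/\langle\sigma\rangle$ via an isomorphism sending the images of $\mathfrak{a},\mathfrak{b}$ to $a,b$.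
   Context: For $\alpha\in\mathbb{F}$, $\mathfrak{J}(\alpha)$ is the commutative algebra with basis $\mathfrak{a},\mathfrak{b},\sigma$ and product $\mathfrak{a}^2=\mathfrak{a}$, $\mathfrak{b}^2=\mathfrak{b}$, $\mathfrak{a}\mathfrak{b}=\frac12\mathfrak{a}+\frac12\mathfrak{b}+\sigma$, $\mathfrak{a}\sigma=\frac{\alpha-1}{2}\mathfrak{a}$, $\mathfrak{b}\sigma=\frac{\alpha-1}{2}\mathfrak{b}$, $\sigma^2=\frac{\alpha-1}{2}\sigma$. In $\mathfrak{J}(1)$, $\langle\sigma\rangle$ is an ideal (it annihilates the algebra). $\langle\langle a,b\rangle\rangle$ denotes the subalgebra generated by $a,b$. *)

From HB Require Import structures.
From mathcomp Require Import all_boot all_order all_algebra.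
Set Implicit Arguments. Unset Strict Implicit. Unset Printing Implicit Defensive.
Import Order.TTheory GRing.Theory Num.Theory.
Local Open Scope ring_scope.

Section Defs.
Variable F : fieldType.

Definition i0 : 'I_3 := inord 0.
Definition i1 : 'I_3 := inord 1.
Definition i2 : 'I_3 := inord 2.

Definition mk3 (p q r : F) : 'rV[F]_3 := \row_(i < 3) [:: p; q; r]`_i.

(* S(delta) = F (+) V, coordinates (alpha, x1, x2) w.r.t. 1, u, v.
   B(x,y) = x1 y1 + delta (x1 y2 + x2 y1) + x2 y2. *)
Definition Bform (delta x1 x2 y1 y2 : F) : F :=
  x1 * y1 + delta * (x1 * y2 + x2 * y1) + x2 * y2.

Definition Smul (delta : F) (x y : 'rV[F]_3) : 'rV[F]_3 :=
  mk3 (x 0 i0 * y 0 i0 + Bform delta (x 0 i1) (x 0 i2) (y 0 i1) (y 0 i2))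
      (x 0 i0 * y 0 i1 + y 0 i0 * x 0 i1)
      (x 0 i0 * y 0 i2 + y 0 i0 * x 0 i2).

Definition S1 : 'rV[F]_3 := mk3 1 0 0.
Definition Su : 'rV[F]_3 := mk3 0 1 0.
Definition Sv : 'rV[F]_3 := mk3 0 0 1.
Definition Sa : 'rV[F]_3 := 2^-1 *: (S1 + Su).
Definition Sb : 'rV[F]_3 := 2^-1 *: (S1 + Sv).

(* J(alpha), coordinates w.r.t. the basis frak a, frak b, sigma; product is the
   bilinear extension of the multiplication table. *)
Definition Jmul (alpha : F) (x y : 'rV[F]_3) : 'rV[F]_3 :=
  let c := (alpha - 1) / 2 in
  let p := x 0 i0 in let q := x 0 i1 in let r := x 0 i2 in
  let p' := y 0 i0 in let q' := y 0 i1 in let r' := y 0 i2 in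
  let m := p * q' + q * p' in
  (p * p') *: mk3 1 0 0 + (q * q') *: mk3 0 1 0
  + m *: mk3 2^-1 2^-1 1
  + (p * r' + r * p') *: (c *: mk3 1 0 0)
  + (q * r' + r * q') *: (c *: mk3 0 1 0)
  + (r * r') *: (c *: mk3 0 0 1).

Definition Ja : 'rV[F]_3 := mk3 1 0 0.
Definition Jb : 'rV[F]_3 := mk3 0 1 0.
Definition Jsigma : 'rV[F]_3 := mk3 0 0 1.

Definition is_subalg (mul : 'rV[F]_3 -> 'rV[F]_3 -> 'rV[F]_3)
  (P : 'rV[F]_3 -> Prop) : Prop :=
  [/\ P 0, (forall k x y, P x -> P y -> P (k *: x + y))
    & (forall x y, P x -> P y -> P (mul x y))].

Definition gen2 (mul : 'rV[F]_3 -> 'rV[F]_3 -> 'rV[F]_3) (a b x : 'rV[F]_3) : Prop :=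
  forall P, is_subalg mul P -> P a -> P b -> P x.

Definition span2 (a b x : 'rV[F]_3) : Prop := exists s t : F, x = s *: a + t *: b.

Definition lin3 (f : 'rV[F]_3 -> 'rV[F]_3) : Prop :=
  forall k x y, f (k *: x + y) = k *: f x + f y.

Definition alg_hom (mul1 mul2 : 'rV[F]_3 -> 'rV[F]_3 -> 'rV[F]_3)
  (f : 'rV[F]_3 -> 'rV[F]_3) : Prop :=
  lin3 f /\ forall x y, f (mul1 x y) = mul2 (f x) (f y).

End Defs.

From HB Require Import structures.
From mathcomp Require Import all_boot all_order all_algebra.
From mathcomp Require Import ring.
Import GRing.Theory.

Set Implicit Arguments.
Unset Strict Implicit.
Unset Printing Implicit Defensive.
Local Open Scope ring_scope.

(** In [S(delta)] the vectors [a], [b], [1] form a basis and [a b = (delta - 1)/4 + (a + b)/2].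
    If [delta <> 1] this puts [1], hence everything, in the subalgebra generated by [a] and
    [b], and [x |-> x0 a + x1 b + x2 (a b - (a + b)/2)] is an isomorphism from
    [J((1 + delta)/2)], as [sigma = ab - (a + b)/2] there.  If [delta = 1] the [1]-coordinate
    [x0 - x1 - x2] in that basis is multiplicative, so its kernel [span {a, b}] is a
    subalgebra missing [1]; the same map then sends [J(1)] onto it with kernel [F sigma]. *)

Lemma i0E : nat_of_ord i0 = 0%N. Proof. exact: inordK. Qed.
Lemma i1E : nat_of_ord i1 = 1%N. Proof. exact: inordK. Qed.
Lemma i2E : nat_of_ord i2 = 2%N. Proof. exact: inordK. Qed.

Lemma row3_ext (F : fieldType) (x y : 'rV[F]_3) :
  x 0 i0 = y 0 i0 -> x 0 i1 = y 0 i1 -> x 0 i2 = y 0 i2 -> x = y.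
Proof.
move=> e0 e1 e2; apply/rowP => -[[|[|[|//]]] lt_j3].
- by rewrite (_ : Ordinal _ = i0) //; apply/val_inj; rewrite /= i0E.
- by rewrite (_ : Ordinal _ = i1) //; apply/val_inj; rewrite /= i1E.
- by rewrite (_ : Ordinal _ = i2) //; apply/val_inj; rewrite /= i2E.
Qed.

Section Subalgebras.
Variables (F : fieldType) (mul : 'rV[F]_3 -> 'rV[F]_3 -> 'rV[F]_3).
Implicit Types (P : 'rV[F]_3 -> Prop) (a b u v w x : 'rV[F]_3).

Section Lincomb.
Variable P : 'rV[F]_3 -> Prop.
Hypothesis subP : is_subalg mul P.

Lemma subalg_lincomb2 u v k1 k2 : P u -> P v -> P (k1 *: u + k2 *: v).
Proof.
have [P0 PD _] := subP; move=> Pu Pv; apply: (PD) => //.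
by rewrite -[k2 *: v]addr0; apply: PD.
Qed.

Lemma subalg_lincomb3 u v w k1 k2 k3 :
  P u -> P v -> P w -> P (k1 *: u + k2 *: v + k3 *: w).
Proof.
have [_ PD _] := subP; move=> Pu Pv Pw.
by rewrite addrC; apply: PD => //; apply: subalg_lincomb2.
Qed.

End Lincomb.

Lemma gen2_span2 a b x : span2 a b x -> gen2 mul a b x.
Proof. by case=> s [t ->] P subP Pa Pb; apply: (subalg_lincomb2 subP). Qed.

Lemma subalg_kernel (f : 'rV[F]_3 -> F) :
  (forall k x y, f (k *: x + y) = k * f x + f y) ->
  (forall x y, f (mul x y) = f x * f y) ->
  is_subalg mul (fun x => f x = 0).
Proof.
move=> f_lin f_mul; split.
- by have := f_lin (-1) 0 0; rewrite scaler0 addr0 mulN1r addNr.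
- by move=> k x y fx fy; rewrite f_lin fx fy mulr0 addr0.
- by move=> x y fx _; rewrite f_mul fx mul0r.
Qed.

End Subalgebras.

Definition S1_coord {F : fieldType} (x : 'rV[F]_3) : F := x 0 i0 - x 0 i1 - x 0 i2.

Definition JtoS {F : fieldType} (delta : F) (x : 'rV[F]_3) : 'rV[F]_3 :=
  x 0 i0 *: Sa F + x 0 i1 *: Sb F + (x 0 i2 * (delta - 1) / 4%:R) *: S1 F.

Definition StoJ {F : fieldType} (delta : F) (y : 'rV[F]_3) : 'rV[F]_3 :=
  mk3 (2%:R * y 0 i1) (2%:R * y 0 i2) (4%:R * S1_coord y / (delta - 1)).

Ltac coords :=
  try apply: row3_ext;
  rewrite /JtoS /StoJ /S1_coord /Sa /Sb /S1 /Su /Sv /Ja /Jb /Jsigma /Smul /Bform /Jmul;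
  rewrite ?mxE ?i0E ?i1E ?i2E /=.

Section SAlgebra.
Variables (F : fieldType) (delta : F).
Hypothesis two_neq0 : (2%:R : F) != 0.
Implicit Types (x y : 'rV[F]_3) (s t : F).

Lemma SaSbS1_decomp x :
  x = (2%:R * x 0 i1) *: Sa F + (2%:R * x 0 i2) *: Sb F + S1_coord x *: S1 F.
Proof. by coords; field. Qed.

Lemma S1_coord_S1 : S1_coord (S1 F) = 1.
Proof. by coords; ring. Qed.

Lemma S1_coord_lin k x y : S1_coord (k *: x + y) = k * S1_coord x + S1_coord y.
Proof. by coords; ring. Qed.

Lemma S1_coord_Smul1 x y : S1_coord (Smul 1 x y) = S1_coord x * S1_coord y.
Proof. by coords; ring. Qed.

Lemma span2_SaSbP x : span2 (Sa F) (Sb F) x <-> S1_coord x = 0.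
Proof.
split=> [[s [t ->]] | x0]; first by coords; field.
by exists (2%:R * x 0 i1), (2%:R * x 0 i2); rewrite {1}[x]SaSbS1_decomp x0 scale0r addr0.
Qed.

Lemma SaSb_free s t : s *: Sa F + t *: Sb F = 0 -> s = 0 /\ t = 0.
Proof.
move=> st0.
have s_coord : s = 2%:R * (s *: Sa F + t *: Sb F) 0 i1 by coords; field.
have t_coord : t = 2%:R * (s *: Sa F + t *: Sb F) 0 i2 by coords; field.
by rewrite st0 !mxE !mulr0 in s_coord t_coord.
Qed.

Lemma S1_SaSb : delta != 1 ->
  S1 F = (4%:R / (delta - 1)) *: Smul delta (Sa F) (Sb F)
         + (- 2%:R / (delta - 1)) *: Sa F + (- 2%:R / (delta - 1)) *: Sb F.
Proof. by rewrite -subr_eq0 => d1; coords; field; rewrite d1 two_neq0. Qed.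

End SAlgebra.

Section SAlgebraGeneration.
Variable F : fieldType.
Hypothesis two_neq0 : (2%:R : F) != 0.

Lemma gen2_Smul_full (delta : F) x :
  delta != 1 -> gen2 (Smul delta) (Sa F) (Sb F) x.
Proof.
move=> d1 P subP Pa Pb; have [_ _ PM] := subP.
have P1 : P (S1 F).
  by rewrite (S1_SaSb two_neq0 d1); apply: (subalg_lincomb3 subP) => //; apply: PM.
by rewrite [x](SaSbS1_decomp two_neq0); apply: (subalg_lincomb3 subP).
Qed.

Lemma span2_Smul1_subalg : is_subalg (Smul 1) (span2 (Sa F) (Sb F)).
Proof.
have [P0 PD PM] := subalg_kernel (@S1_coord_lin F) (@S1_coord_Smul1 F).
have span2P := span2_SaSbP two_neq0.
split=> [|k x y|x y]; first exact/span2P.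
- by move=> /span2P x0 /span2P y0; apply/span2P; exact: PD.
- by move=> /span2P x0 /span2P y0; apply/span2P; exact: PM.
Qed.

Lemma gen2_Smul1 x : gen2 (Smul 1) (Sa F) (Sb F) x <-> span2 (Sa F) (Sb F) x.
Proof.
split; last exact: gen2_span2.
apply; first exact: span2_Smul1_subalg.
- by exists 1, 0; rewrite scale1r scale0r addr0.
- by exists 0, 1; rewrite scale1r scale0r add0r.
Qed.

Lemma gen2_Smul1_S1 : ~ gen2 (Smul 1) (Sa F) (Sb F) (S1 F).
Proof.
move/gen2_Smul1/(span2_SaSbP two_neq0)/eqP.
by rewrite S1_coord_S1 oner_eq0.
Qed.

End SAlgebraGeneration.

Section JtoS.
Variables (F : fieldType) (delta : F).
Hypothesis two_neq0 : (2%:R : F) != 0.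
Implicit Types x y : 'rV[F]_3.

Let four_neq0 : (4%:R : F) != 0.
Proof. by rewrite (natrM F 2 2) mulf_neq0. Qed.

Lemma JtoS_lin : lin3 (JtoS delta).
Proof. by move=> k x y; coords; ring. Qed.

Lemma JtoS_mul x y :
  JtoS delta (Jmul (2^-1 * (1 + delta)) x y) = Smul delta (JtoS delta x) (JtoS delta y).
Proof. by coords; field; rewrite four_neq0 two_neq0. Qed.

Lemma JtoS_hom : alg_hom (Jmul (2^-1 * (1 + delta))) (Smul delta) (JtoS delta).
Proof. by split; [exact: JtoS_lin | exact: JtoS_mul]. Qed.

Lemma JtoS_Ja : JtoS delta (Ja F) = Sa F.
Proof. by coords; ring. Qed.

Lemma JtoS_Jb : JtoS delta (Jb F) = Sb F.
Proof. by coords; ring. Qed.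

Lemma JtoS_bij : delta != 1 -> bijective (JtoS delta).
Proof.
rewrite -subr_eq0 => d1.
by exists (StoJ delta) => x; coords; field; rewrite ?d1 ?four_neq0 ?two_neq0.
Qed.

End JtoS.

Section JtoS1.
Variable F : fieldType.
Hypothesis two_neq0 : (2%:R : F) != 0.
Implicit Types x y : 'rV[F]_3.

Lemma JtoS1E x : JtoS 1 x = x 0 i0 *: Sa F + x 0 i1 *: Sb F.
Proof. by rewrite /JtoS subrr mulr0 mul0r scale0r addr0. Qed.

Lemma JtoS1_hom : alg_hom (Jmul 1) (Smul 1) (JtoS (1 : F)).
Proof.
have half_two : 2^-1 * (1 + 1) = 1 :> F by rewrite mulVf.
by have := @JtoS_hom F 1 two_neq0; rewrite half_two.
Qed.

Lemma JtoS1_eq0 x : JtoS 1 x = 0 <-> exists k, x = k *: Jsigma F.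
Proof.
rewrite JtoS1E; split=> [/(SaSb_free two_neq0) [x0 x1] | [k ->]].
- by exists (x 0 i2); coords; rewrite ?x0 ?x1; ring.
- by coords; ring.
Qed.

Lemma JtoS1_image y : span2 (Sa F) (Sb F) y <-> exists x, JtoS 1 x = y.
Proof.
split=> [[s [t ->]] | [x <-]]; last by exists (x 0 i0), (x 0 i1); rewrite JtoS1E.
by exists (mk3 s t 0); rewrite JtoS1E; congr (_ *: _ + _ *: _); coords.
Qed.

End JtoS1.

Theorem proposition3p4 (F : fieldType) (delta : F) (hF : (2%:R : F) != 0) :
  ((forall x, gen2 (Smul delta) (Sa F) (Sb F) x) <-> delta != 1)
  /\ (delta != 1 ->
      exists f : 'rV[F]_3 -> 'rV[F]_3,
        [/\ alg_hom (Jmul (2^-1 * (1 + delta))) (Smul delta) f, bijective f,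
            f (Ja F) = Sa F & f (Jb F) = Sb F])
  /\ (delta = 1 ->
      [/\ (forall x, gen2 (Smul delta) (Sa F) (Sb F) x <-> span2 (Sa F) (Sb F) x),
          (forall s t : F, s *: Sa F + t *: Sb F = 0 -> s = 0 /\ t = 0)
        & exists phi : 'rV[F]_3 -> 'rV[F]_3,
            [/\ alg_hom (Jmul 1) (Smul delta) phi,
                (forall x, phi x = 0 <-> exists k : F, x = k *: Jsigma F),
                (forall y, span2 (Sa F) (Sb F) y <-> exists x, phi x = y),
                phi (Ja F) = Sa F & phi (Jb F) = Sb F]]).
Proof.
split; [split | split].
- move=> gen_full; apply/eqP => delta1; subst delta.
  exact: (gen2_Smul1_S1 hF (gen_full _)).
- by move=> delta_neq1 x; apply: gen2_Smul_full.
- move=> delta_neq1; exists (JtoS delta).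
  split; [exact: JtoS_hom | exact: JtoS_bij | exact: JtoS_Ja | exact: JtoS_Jb].
- move=> ->; split; [exact: (gen2_Smul1 hF) | exact: (SaSb_free hF) | exists (JtoS 1)].
  split; [exact: (JtoS1_hom hF) | exact: (JtoS1_eq0 hF) | exact: (@JtoS1_image F)
         | exact: JtoS_Ja | exact: JtoS_Jb].
Qed.
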